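(* For every integer $m\ge13$, $\kappa_m\ge 0.5$.
   Context: $s(m)=m(\log m)^2$. For real $y>1$, $x>1$, $w_y(x)=1-\frac yx-\frac{y-1}{\log y}\frac{\log x}{x}$. $\kappa_m=\frac1m\sum_{p\le (m+1)/2,\ p\text{ prime}}\min_{0\le j\le m}\{\lfloor j/p\rfloor+\lfloor (m-j)/p\rfloor\}\frac{\log p}{p-1}w_p(s(m)e^{s(m)})$. *)

From Stdlib Require Import Reals.
From mathcomp Require Import all_boot.
Open Scope R_scope.

Definition s (m : nat) : R := INR m * (ln (INR m)) ^ 2.

Definition w (y x : R) : R := 1 - y / x - (y - 1) / ln y * (ln x / x).

(* min_{0 <= j <= m} (floor(j/p) + floor((m-j)/p)), for nat m, p.
   The neutral element m%/p is itself the j = 0 term, so it does not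
   change the minimum. *)
Definition minfloor (m p : nat) : nat :=
  \big[minn/(m %/ p)%N]_(j < m.+1) (j %/ p + (m - j) %/ p)%N.

Definition kappa_term (m p : nat) : R :=
  INR (minfloor m p) * (ln (INR p) / (INR p - 1)) * w (INR p) (s m * exp (s m)).

Definition kappa (m : nat) : R :=
  / INR m *
  foldr Rplus 0 [seq kappa_term m p | p <- iota 0 m.+2 & prime p && (p.*2 <= m.+1)%N].

From Stdlib Require Import Reals.
From mathcomp Require Import all_boot.
Open Scope R_scope.
From Stdlib Require Import Lra.
From mathcomp Require Import zify.

(* Since x = s(m) e^(s(m)) is astronomically large, w_p(x) >= 1 - 10^-4 for
   all p <= m, and the minimum over j is at least floor((m+1)/p) - 1, because
   the two remainders mod p add up to at most 2p - 2.  With rational lower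
   bounds on ln 2, ln 3, ln 5, ln 7 the four terms sum to about 0.655 m - 3.9,
   which exceeds m/2 once m >= 20; for 13 <= m <= 19 the exact floors are
   evaluated.  The margin at m = 13 is only about 0.02, which is why ln 2 is
   needed to three decimals. *)

Lemma ln_le x y : 0 < x -> x <= y -> ln x <= ln y.
Proof.
move=> x_gt0 /Rle_lt_or_eq_dec [lt_xy | ->]; last exact: Rle_refl.
exact/Rlt_le/ln_increasing.
Qed.

Lemma exp_le x y : x <= y -> exp x <= exp y.
Proof.
case/Rle_lt_or_eq_dec => [lt_xy | ->]; last exact: Rle_refl.
exact/Rlt_le/exp_increasing.
Qed.

Lemma exp_mulINR (n : nat) x : exp (INR n * x) = exp x ^ n.
Proof.
elim: n => [|n IHn]; first by rewrite Rmult_0_l exp_0.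
by rewrite S_INR Rmult_plus_distr_r Rmult_1_l exp_plus IHn /= Rmult_comm.
Qed.

Lemma pow_le_exp (n : nat) x : (0 < n)%N -> - INR n <= x ->
  (1 + x / INR n) ^ n <= exp x.
Proof.
move=> n_gt0 x_ge; have n_pos : 0 < INR n by apply/lt_0_INR/ltP.
have -> : exp x = exp (x / INR n) ^ n.
  by rewrite -exp_mulINR; congr exp; field; lra.
apply: pow_incr; split; last exact: exp_ineq1_le.
have : -1 <= x / INR n.
  by apply/(Rmult_le_reg_r (INR n)) => //; rewrite /Rdiv Rmult_assoc Rinv_l; lra.
lra.
Qed.

Lemma ln_ge_of_pow (n : nat) p a : (0 < n)%N -> 0 < p -> a <= INR n ->
  / p <= (1 - a / INR n) ^ n -> a <= ln p.
Proof.
move=> n_gt0 p_gt0 a_le le_inv.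
have : / p <= exp (- a).
  apply: Rle_trans le_inv _; rewrite /Rminus -Rdiv_opp_l.
  by apply: pow_le_exp => //; lra.
by move/(ln_le _ _ (Rinv_0_lt_compat _ p_gt0)); rewrite ln_exp ln_Rinv //; lra.
Qed.

Lemma ln2_ge : 692/1000 <= ln 2.
Proof. by apply: (ln_ge_of_pow 256); rewrite // ?INR_IZR_INZ /=; lra. Qed.

Lemma ln3_ge : 1096/1000 <= ln 3.
Proof. by apply: (ln_ge_of_pow 256); rewrite // ?INR_IZR_INZ /=; lra. Qed.

Lemma ln5_ge : 1604/1000 <= ln 5.
Proof. by apply: (ln_ge_of_pow 256); rewrite // ?INR_IZR_INZ /=; lra. Qed.

Lemma ln7_ge : 1938/1000 <= ln 7.
Proof. by apply: (ln_ge_of_pow 256); rewrite // ?INR_IZR_INZ /=; lra. Qed.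

Lemma mul_one_sub_w_le y x : 2 <= y -> 1 <= x ->
  x * (1 - w y x) <= y * (1 + 2 * ln x).
Proof.
move=> y_ge2 x_ge1.
have ln_y_ge : / 2 <= ln y by have := ln_le 2 y Rlt_0_2 y_ge2; have := ln_lt_2; lra.
have ln_x_ge0 : 0 <= ln x by rewrite -ln_1; apply: ln_le; lra.
have ratio_le : (y - 1) / ln y <= 2 * y.
  have : / ln y <= 2 by rewrite -[2]Rinv_inv; apply: Rinv_le_contravar; lra.
  by rewrite /Rdiv => ?; nra.
have -> : x * (1 - w y x) = y + (y - 1) / ln y * ln x by rewrite /w; field; lra.
by nra.
Qed.

Lemma INR_ge13 m : (13 <= m)%N -> 13 <= INR m.
Proof. by move/leP/le_INR; rewrite INR_IZR_INZ. Qed.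

Lemma exp_4x_ge x : 13 <= x -> 50000 * x <= exp (4 * x).
Proof.
move=> x_ge.
have INR8 : INR 8 = 8 by rewrite INR_IZR_INZ.
have pow8_le : (1 + 4 * x / 8) ^ 8 <= exp (4 * x).
  by rewrite -INR8; apply: pow_le_exp => //; rewrite INR8; lra.
have pow7_ge : (15 / 2) ^ 7 <= (1 + 4 * x / 8) ^ 7 by apply: pow_incr; split; lra.
have : (1 + 4 * x / 8) ^ 8 = (1 + 4 * x / 8) ^ 7 * (1 + 4 * x / 8) by ring.
nra.
Qed.

Lemma s_ge m : (13 <= m)%N -> 4 * INR m <= s m.
Proof.
move=> m_ge; have M_ge := INR_ge13 m m_ge.
have ln_M_ge : 2 <= ln (INR m).
  rewrite -[2]ln_exp; apply: ln_le; first exact: exp_pos.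
  have -> : 2 = 1 + 1 by lra.
  by rewrite exp_plus; have := exp_le_3; have := exp_pos 1; nra.
have : 4 <= ln (INR m) ^ 2 by nra.
by rewrite /s; nra.
Qed.

Lemma w_ge m y : (13 <= m)%N -> 2 <= y <= INR m ->
  1 - 1 / 10000 <= w y (s m * exp (s m)).
Proof.
move=> m_ge [y_ge2 y_le].
have M_ge := INR_ge13 m m_ge.
have S_ge := s_ge m m_ge.
set S := s m in S_ge *; set E := exp S; set X := S * E.
have E_ge : 50000 * INR m <= E.
  exact: Rle_trans _ _ _ (exp_4x_ge _ M_ge) (exp_le _ _ S_ge).
have ln_S_lt : ln S < S by have := exp_ineq1_le (ln S); rewrite exp_ln; lra.
have ln_X_le : ln X <= 2 * S by rewrite /X ln_mult ?ln_exp; [lra|lra|exact: exp_pos].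
have X_ge : 50000 * INR m * S <= X by rewrite /X; nra.
have X_ge1 : 1 <= X by nra.
have := mul_one_sub_w_le y X y_ge2 X_ge1; nra.
Qed.

Lemma divn_addS_pred_le a b p : (0 < p)%N ->
  (((a + b).+1 %/ p).-1 <= a %/ p + b %/ p)%N.
Proof.
move=> p_gt0; rewrite -subn1 leq_subLR add1n -ltnS ltn_divLR //.
have := ltn_pmod a p_gt0; have := ltn_pmod b p_gt0.
have := divn_eq a p; have := divn_eq b p.
move: (a %/ p) (a %% p) (b %/ p) (b %% p) => qa ra qb rb; nia.
Qed.

Lemma minfloor_ge m p : (0 < p)%N -> ((m.+1 %/ p).-1 <= minfloor m p)%N.
Proof.
move=> p_gt0; rewrite /minfloor; apply: (big_ind (fun k => (m.+1 %/ p).-1 <= k)%N).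
- by have := divn_addS_pred_le m 0 p p_gt0; rewrite div0n !addn0.
- by move=> k l; rewrite leq_min => -> ->.
- move=> [j /= j_le] _; have := divn_addS_pred_le j (m - j) p p_gt0.
  by rewrite subnKC // -ltnS.
Qed.

Definition term_minorant (m p : nat) (a : R) : R :=
  INR ((m.+1 %/ p).-1) * (a / (INR p - 1)) * (1 - 1 / 10000).

Lemma kappa_term_ge m p a : (13 <= m)%N -> prime p -> (p <= m)%N ->
  0 <= a <= ln (INR p) -> term_minorant m p a <= kappa_term m p.
Proof.
move=> m_ge p_prime p_le [a_ge0 a_le].
have P_ge2 : 2 <= INR p by apply/(le_INR 2)/leP/prime_gt1.
have floor_le : INR ((m.+1 %/ p).-1) <= INR (minfloor m p).
  exact/le_INR/leP/minfloor_ge/prime_gt0.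
have inv_pos : 0 < / (INR p - 1) by apply: Rinv_0_lt_compat; lra.
have w_large := w_ge m (INR p) m_ge (conj P_ge2 (le_INR _ _ (elimT leP p_le))).
rewrite /term_minorant /kappa_term /Rdiv.
apply: Rmult_le_compat; try lra.
- by apply: Rmult_le_pos; [exact: pos_INR | nra].
- by apply: Rmult_le_compat; [exact: pos_INR | nra | done | nra].
Qed.

Lemma kappa_term_ge0 m p : (13 <= m)%N -> prime p -> (p <= m)%N ->
  0 <= kappa_term m p.
Proof.
move=> m_ge p_prime p_le.
have P_ge1 : 1 <= INR p by apply/(le_INR 1)/leP/prime_gt0.
have := kappa_term_ge m p 0 m_ge p_prime p_le.
rewrite /term_minorant /Rdiv !Rmult_0_l Rmult_0_r Rmult_0_l; apply.
by split; [lra | rewrite -ln_1; apply: ln_le; lra].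
Qed.

Lemma sum_map_ge0 (T : eqType) (f : T -> R) (l : seq T) :
  (forall x, x \in l -> 0 <= f x) -> 0 <= foldr Rplus 0 [seq f x | x <- l].
Proof.
elim: l => [|x l IHl] f_ge0 /=; first exact: Rle_refl.
apply: Rplus_le_le_0_compat; first by apply: f_ge0; rewrite inE eqxx.
by apply: IHl => y y_in; apply: f_ge0; rewrite inE y_in orbT.
Qed.

Lemma kappa_primes_split m : (13 <= m)%N ->
  [seq p <- iota 0 m.+2 | prime p && (p.*2 <= m.+1)%N] =
  [:: 2; 3; 5; 7]%N ++ [seq p <- iota 8 (m - 6) | prime p && (p.*2 <= m.+1)%N].
Proof.
move=> m_ge; have -> : m.+2 = (8 + (m - 6))%N by lia.
rewrite iotaD filter_cat; congr (_ ++ _).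
rewrite (@eq_in_filter _ _ prime) // => p; rewrite mem_iota => /andP[_ p_lt].
by case: (prime p) => //=; apply/idP; lia.
Qed.

Lemma small_primes_le_kappa m : (13 <= m)%N ->
  kappa_term m 2 + kappa_term m 3 + kappa_term m 5 + kappa_term m 7
  <= INR m * kappa m.
Proof.
move=> m_ge; have M_pos : 0 < INR m by apply/lt_0_INR/ltP; lia.
rewrite /kappa -Rmult_assoc Rinv_r ?Rmult_1_l; last lra.
rewrite kappa_primes_split // map_cat foldr_cat /=.
suff : 0 <= foldr Rplus 0
  [seq kappa_term m p | p <- iota 8 (m - 6) & prime p && (p.*2 <= m.+1)%N].
  by lra.
apply: sum_map_ge0 => p; rewrite mem_filter => /andP[/andP[p_prime p_le] _].
by apply: kappa_term_ge0 => //; lia.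
Qed.

Lemma pred_divn_ge m p : (0 < p)%N -> (m + 2 <= p * ((m.+1 %/ p).-1 + 2))%N.
Proof.
move=> p_gt0; have := ltn_ceil m.+1 p_gt0.
by case: (m.+1 %/ p) => [|k] /=; rewrite mulnC; lia.
Qed.

Lemma INR_pred_divn_ge m p : (0 < p)%N ->
  INR m + 2 <= INR p * (INR ((m.+1 %/ p).-1) + 2).
Proof.
move=> /(pred_divn_ge m)/leP/le_INR.
by rewrite mult_INR !plus_INR /=; lra.
Qed.

Lemma small_primes_minorant_ge m : (13 <= m)%N ->
  INR m / 2 <= term_minorant m 2 (692/1000) + term_minorant m 3 (1096/1000)
              + term_minorant m 5 (1604/1000) + term_minorant m 7 (1938/1000).
Proof.
move=> m_ge; case: (leqP 20 m) => [m_ge20 | m_lt20].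
- have := INR_pred_divn_ge m 2 isT; have := INR_pred_divn_ge m 3 isT.
  have := INR_pred_divn_ge m 5 isT; have := INR_pred_divn_ge m 7 isT.
  have : 20 <= INR m by move/leP/le_INR: m_ge20; rewrite INR_IZR_INZ.
  by rewrite /term_minorant /=; lra.
- have [k m_eq] : exists k, m = (13 + k)%N by exists (m - 13)%N; lia.
  have : (k < 7)%N by lia.
  rewrite {}m_eq; case: k => [|[|[|[|[|[|[|k]]]]]]] // _.
  all: by rewrite /term_minorant /=; lra.
Qed.

Theorem lemma6p5 : forall m : nat, (13 <= m)%N -> kappa m >= 1 / 2.
Proof.
move=> m m_ge.
have M_pos : 0 < INR m by have := INR_ge13 m m_ge; lra.
have minorants_le :
    term_minorant m 2 (692/1000) + term_minorant m 3 (1096/1000)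
    + term_minorant m 5 (1604/1000) + term_minorant m 7 (1938/1000)
    <= kappa_term m 2 + kappa_term m 3 + kappa_term m 5 + kappa_term m 7.
{ repeat apply: Rplus_le_compat; apply: kappa_term_ge => //; try lia.
  all: split; [lra | rewrite INR_IZR_INZ].
  - exact: ln2_ge.
  - exact: ln3_ge.
  - exact: ln5_ge.
  - exact: ln7_ge. }
have := small_primes_le_kappa m m_ge; have := small_primes_minorant_ge m m_ge.
by move=> *; apply: Rle_ge; nra.
Qed.
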